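(* Let $A$ be a local integral domain and let $\mathfrak{p}$ be a prime ideal of $A$ such that $A$ is straight at $\mathfrak{p}$. Then: (i) if $b\in\mathfrak{p}A_\mathfrak{p}$, then $b\in\mathfrak{p}A[b]$; (ii) $A$ is integrally closed in the ring $A+\mathfrak{p}A_\mathfrak{p}$.
   Context: All rings are commutative with identity. An overring of a domain $A$ is a ring $B$ with $A\subseteq B\subseteq \operatorname{Frac}(A)$. A domain $A$ is straight at a prime ideal $\mathfrak{p}$ if for every overring $B$ of $A$, the $(A/\mathfrak{p})$-module $B/\mathfrak{p}B$ is torsion-free. Here $A_\mathfrak{p}$ denotes the localization of $A$ at $\mathfrak{p}$, viewed inside $\operatorname{Frac}(A)$, and $A+\mathfrak{p}A_\mathfrak{p}$ is the subring of $\operatorname{Frac}(A)$ consisting of sums of an element of $A$ and an element of $\mathfrak{p}A_\mathfrak{p}$. *)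

From HB Require Import structures.
From mathcomp Require Import all_boot all_order all_algebra.
From mathcomp Require Import fraction.
Set Implicit Arguments. Unset Strict Implicit. Unset Printing Implicit Defensive.
Import Order.TTheory GRing.Theory Num.Theory.
Local Open Scope ring_scope.

Section Defs.
Variable A : idomainType.

Definition K := {fraction A}.
Definition emb (a : A) : K := @FracField.tofrac A a.

Definition is_ideal (I : A -> Prop) : Prop :=
  I 0 /\ (forall x y, I x -> I y -> I (x + y)) /\ (forall a x, I x -> I (a * x)).
Definition proper_ideal (I : A -> Prop) : Prop := is_ideal I /\ ~ I 1.
Definition prime_ideal (I : A -> Prop) : Prop :=
  proper_ideal I /\ (forall x y, I (x * y) -> I x \/ I y).
Definition maximal_ideal (I : A -> Prop) : Prop :=
  proper_ideal I /\
  (forall J, proper_ideal J -> (forall x, I x -> J x) -> forall x, J x <-> I x).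
Definition local_ring : Prop :=
  exists m, maximal_ideal m /\ forall m', maximal_ideal m' -> forall x, m' x <-> m x.

Definition subring (B : K -> Prop) : Prop :=
  B 0 /\ B 1 /\ (forall x y, B x -> B y -> B (x - y)) /\
  (forall x y, B x -> B y -> B (x * y)).
Definition overring (B : K -> Prop) : Prop :=
  subring B /\ forall a, B (emb a).

Definition ext_ideal (p : A -> Prop) (B : K -> Prop) (x : K) : Prop :=
  exists n (s : 'I_n -> A) (t : 'I_n -> K),
    (forall i, p (s i)) /\ (forall i, B (t i)) /\ x = \sum_(i < n) emb (s i) * t i.

(* A straight at p: for every overring B, the (A/p)-module B/pB is torsion-free,
   i.e. for a in A with a mod p <> 0 and b in B, a.(b mod pB) = 0 implies
   b mod pB = 0. *)
Definition straight_at (p : A -> Prop) : Prop :=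
  forall B, overring B ->
    forall (a : A) (b : K), ~ p a -> B b -> ext_ideal p B (emb a * b) -> ext_ideal p B b.

Definition localization (p : A -> Prop) (x : K) : Prop :=
  exists a s : A, ~ p s /\ x = emb a / emb s.

Definition adjoin (b : K) (x : K) : Prop :=
  exists q : {poly A}, x = (map_poly emb q).[b].

Definition A_plus (p : A -> Prop) (x : K) : Prop :=
  exists a y, ext_ideal p (localization p) y /\ x = emb a + y.

Definition integral_over_A (x : K) : Prop :=
  exists q : {poly A}, q \is monic /\ (map_poly emb q).[x] = 0.
End Defs.

From Pilot Require Import Defs.
From HB Require Import structures.
From mathcomp Require Import all_boot all_order all_algebra.
From mathcomp Require Import fraction ring.
From mathcomp Require Import boolp classical_sets.
Set Implicit Arguments. Unset Strict Implicit. Unset Printing Implicit Defensive.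
Import GRing.Theory.
Local Open Scope ring_scope.

(* If b = c/s with c in p and s outside p, then s b = c lies in p A[b], and
   straightness of the overring A[b] at p yields b in p A[b].
   For x = a + y integral over A, with a in A and y in p A_p, the same argument
   in A[x] = A[y] gives y in p A[x], hence A[x] = A + p A[x].  Division by the
   monic equation of x shows that A[x] is spanned over A by 1, x, ..., x^(n-1),
   and 1 - c is a unit for c in p because A is local; Nakayama's lemma then
   gives A[x] = A, so x lies in A. *)

HB.instance Definition _ (A : idomainType) :=
  GRing.RMorphism.copy (@emb A) (@FracField.tofrac A).

Section LocalRing.
Variable A : idomainType.
Implicit Types (I J : A -> Prop) (C : (A -> Prop) -> Prop).

Lemma proper_ideal_chain_union I C :
  Defs.proper_ideal I ->
  (forall J, C J -> Defs.proper_ideal J /\ forall x, I x -> J x) ->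
  (forall J J', C J -> C J' -> (forall x, J x -> J' x) \/ (forall x, J' x -> J x)) ->
  Defs.proper_ideal (fun x => I x \/ exists2 J, C J & J x).
Proof.
move=> [[I0 [ID IM]] I1] CI Ctot; set U := fun x => _.
have common x y : U x -> U y ->
    exists J, [/\ Defs.proper_ideal J, J x, J y & forall z, J z -> U z].
  have subU J : C J -> forall z, J z -> U z by move=> CJ z Jz; right; exists J.
  case=> [Ix|[J CJ Jx]] [Iy|[J' CJ' Jy]].
  - by exists I; split=> // z; left.
  - by have [PJ' IJ'] := CI J' CJ'; exists J'; split=> //; [apply: IJ' | apply: subU].
  - by have [PJ IJ] := CI J CJ; exists J; split=> //; [apply: IJ | apply: subU].
  - have [JJ'|J'J] := Ctot J J' CJ CJ'.
      by exists J'; split=> //; [case: (CI J' CJ') | apply: JJ' | apply: subU].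
    by exists J; split=> //; [case: (CI J CJ) | apply: J'J | apply: subU].
split; last by case=> [//|[J /CI [[_ J1] _]]].
split; first by left.
split=> [x y Ux Uy | a x Ux].
  by have [J [[[_ [JD _]] _] Jx Jy JU]] := common x y Ux Uy; apply/JU/JD.
by have [J [[[_ [_ JM]] _] Jx _ JU]] := common x x Ux Ux; apply/JU/JM.
Qed.

Lemma proper_ideal_sub_maximal I :
  Defs.proper_ideal I -> exists2 M, maximal_ideal M & forall x, I x -> M x.
Proof.
move=> PI.
pose T := {J : A -> Prop | Defs.proper_ideal J /\ forall x, I x -> J x}.
pose R (s t : T) := `[< forall x, sval s x -> sval t x >].
have [||S Stot|t tmax] := @ZL_preorder T (exist _ I (conj PI (fun _ => id))) R.
- by move=> s; apply/asboolP.
- by move=> r s t /asboolP rs /asboolP st; apply/asboolP => x /rs /st.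
- pose C J := exists2 s, S s & sval s = J.
  have CI J : C J -> Defs.proper_ideal J /\ forall x, I x -> J x.
    by case=> s _ <-; exact: (svalP s).
  have Ctot J J' : C J -> C J' -> (forall x, J x -> J' x) \/ (forall x, J' x -> J x).
    case=> s Ss <- [s' Ss' <-].
    by have [/asboolP|/asboolP] := Stot s s' Ss Ss'; [left|right].
  have PU := proper_ideal_chain_union PI CI Ctot.
  have IU x : I x -> I x \/ exists2 J, C J & J x by left.
  exists (exist _ _ (conj PU IU) : T) => s Ss.
  by apply/asboolP => x sx; right; exists (sval s) => //; exists s.
- have [Pt It] := svalP t.
  exists (sval t) => //; split=> // J PJ tJ.
  have /asboolP Jt := tmax (exist _ J (conj PJ (fun x Ix => tJ x (It x Ix)))) (asboolT tJ).
  by move=> x; split; [apply: Jt | apply: tJ].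
Qed.

(* [local_ring] only asserts that the maximal ideal is unique, so Krull's
   theorem is needed to put both I and (1 - c) A inside it. *)
Lemma local_ring_unit_1B I :
  local_ring A -> Defs.proper_ideal I -> forall c, I c -> (1 - c) \is a GRing.unit.
Proof.
move=> [m [[[[_ [mD _]] m1] _] m_uniq]] PI c Ic; apply/idPn => nu.
have PJ : Defs.proper_ideal (fun x => exists r, x = r * (1 - c)).
  split; last by case=> r /esym r1; move/negP: nu; apply; apply/unitrPr; exists r; rewrite mulrC.
  split; first by exists 0; rewrite mul0r.
  split=> [x y [r ->] [r' ->] | a x [r ->]]; first by exists (r + r'); rewrite mulrDl.
  by exists (a * r); rewrite mulrA.
have [M1 /(m_uniq M1) M1m JM1] := proper_ideal_sub_maximal PJ.
have [M2 /(m_uniq M2) M2m IM2] := proper_ideal_sub_maximal PI.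
apply: m1; rewrite -(subrK c 1); apply: mD.
  by apply/M1m/JM1; exists 1; rewrite mul1r.
exact/M2m/IM2.
Qed.

End LocalRing.

Section LinearCombinations.
Variables (A : idomainType) (P : A -> Prop).
Hypothesis P_ideal : is_ideal P.
Implicit Types (v : seq (K A)) (x y w : K A).

Definition in_A x : Prop := exists a : A, x = emb a.

Definition lincomb v x : Prop :=
  exists g : nat -> A, (forall i, P (g i)) /\ x = \sum_(i < size v) emb (g i) * v`_i.

Lemma lincomb0 v : lincomb v 0.
Proof.
have [P0 _] := P_ideal.
by exists (fun=> 0); split=> //; rewrite big1 // => i _; rewrite rmorph0 mul0r.
Qed.

Lemma lincombD v x y : lincomb v x -> lincomb v y -> lincomb v (x + y).
Proof.
have [_ [PD _]] := P_ideal.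
move=> [g [Pg ->]] [h [Ph ->]]; exists (fun i => g i + h i); split=> [i|]; first exact: PD.
by rewrite -big_split; apply: eq_bigr => i _; rewrite rmorphD mulrDl.
Qed.

Lemma lincombZ v a x : lincomb v x -> lincomb v (emb a * x).
Proof.
have [_ [_ PM]] := P_ideal.
move=> [g [Pg ->]]; exists (fun i => a * g i); split=> [i|]; first exact: PM.
by rewrite mulr_sumr; apply: eq_bigr => i _; rewrite rmorphM mulrA.
Qed.

Lemma lincomb_sum v n (F : 'I_n -> K A) :
  (forall i, lincomb v (F i)) -> lincomb v (\sum_(i < n) F i).
Proof.
move=> HF; apply: (big_ind (lincomb v)) => //; [exact: lincomb0 | exact: lincombD].
Qed.

Lemma lincomb_cons w v x :
  lincomb (w :: v) x -> exists2 c, P c & lincomb v (x - emb c * w).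
Proof.
move=> [g [Pg ->]]; exists (g 0%N) => //; exists (g \o succn); split=> // [i|].
  exact: Pg.
by rewrite big_ord_recl addrAC subrr add0r.
Qed.

Lemma lincomb_in_A v x : (forall w, w \in v -> in_A w) -> lincomb v x -> in_A x.
Proof.
move=> vA [g [_ ->]]; apply: (big_ind in_A).
- by exists 0; rewrite rmorph0.
- by move=> _ _ [a ->] [b ->]; exists (a + b); rewrite rmorphD.
- move=> i _; have [b ->] := vA _ (mem_nth 0 (ltn_ord i)).
  by exists (g i * b); rewrite rmorphM.
Qed.

Lemma lincomb_cons_subst w v a0 x a :
  lincomb v (w - emb a0) -> lincomb (w :: v) (x - emb a) ->
  exists a', lincomb v (x - emb a').
Proof.
move=> wa0 /lincomb_cons [c Pc xa]; exists (a + c * a0).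
have -> : x - emb (a + c * a0) = x - emb a - emb c * w + emb c * (w - emb a0).
  by rewrite rmorphD rmorphM; ring.
exact/lincombD/lincombZ.
Qed.

Hypothesis P_unit : forall c, P c -> (1 - c) \is a GRing.unit.

Lemma lincomb_cons_solve w v a :
  lincomb (w :: v) (w - emb a) -> exists a', lincomb v (w - emb a').
Proof.
move=> /lincomb_cons [c /P_unit unit_c wa]; exists ((1 - c)^-1 * a).
have -> : w - emb ((1 - c)^-1 * a) = emb (1 - c)^-1 * (w - emb a - emb c * w).
  transitivity (emb ((1 - c)^-1 * (1 - c)) * w - emb ((1 - c)^-1 * a)).
    by rewrite mulVr // rmorph1 mul1r.
  by rewrite !rmorphM rmorphB rmorph1; ring.
exact: lincombZ.
Qed.

Lemma nakayama_lincomb v :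
  (forall w, w \in v -> exists a, lincomb v (w - emb a)) ->
  forall w, w \in v -> in_A w.
Proof.
elim: v => [//|w0 v IH] v_modP.
have [a0 w0a0] : exists a0, lincomb v (w0 - emb a0).
  by have [a w0a] := v_modP w0 (mem_head _ _); exact: lincomb_cons_solve w0a.
have vA : forall w, w \in v -> in_A w.
  apply: IH => w wv; have /v_modP [a wa] : w \in w0 :: v by rewrite inE wv orbT.
  exact: lincomb_cons_subst w0a0 wa.
move=> w; rewrite inE => /predU1P [->|/vA //].
have [b w0b] := lincomb_in_A vA w0a0.
by exists (a0 + b); rewrite rmorphD /= -w0b addrC subrK.
Qed.

End LinearCombinations.

Lemma emb_inj (A : idomainType) : injective (@emb A).
Proof. by move=> a b /eqP; rewrite /emb tofrac_eq => /eqP. Qed.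

Lemma lincomb_scale (A : idomainType) (P : A -> Prop) v c (x : K A) :
  is_ideal P -> P c -> lincomb (fun=> True) v x -> lincomb P v (emb c * x).
Proof.
move=> [_ [_ PM]] Pc [g [_ ->]]; exists (fun i => g i * c); split=> [i|]; first exact: PM.
by rewrite mulr_sumr; apply: eq_bigr => i _; rewrite rmorphM /= mulrA (mulrC (emb c)).
Qed.

Lemma adjoin_integral_lincomb (A : idomainType) (x : K A) :
  integral_over_A x ->
  exists n, forall z, adjoin x z -> lincomb (fun=> True) (mkseq (fun i => x ^+ i) n) z.
Proof.
move=> [f [f_monic fx0]]; exists (size f).-1 => _ [q ->].
rewrite (Pdiv.IdomainMonic.divp_eq f_monic q) rmorphD rmorphM /= hornerD hornerM fx0.
rewrite mulr0 add0r (@horner_coef_wide _ (size f).-1); last first.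
  have f_gt0 : (0 < size f)%N by rewrite lt0n size_poly_eq0 monic_neq0.
  rewrite size_map_inj_poly ?rmorph0 //; last exact: emb_inj.
  by rewrite -ltnS prednK // ltn_modp monic_neq0.
exists (fun i => (q %% f)`_i); split=> //; rewrite size_mkseq.
by apply: eq_bigr => i _; rewrite nth_mkseq // coef_map.
Qed.

Section ExtendedIdeals.
Variables (A : idomainType) (p : A -> Prop).
Implicit Types (B : K A -> Prop) (x y : K A).

Lemma adjoin_overring x : overring (adjoin x).
Proof.
split=> [|a]; last by exists a%:P; rewrite map_polyC hornerC.
split; first by exists 0; rewrite rmorph0 horner0.
split; first by exists 1; rewrite rmorph1 hornerC.
split=> _ _ [q1 ->] [q2 ->].
  by exists (q1 - q2); rewrite rmorphB hornerD hornerN.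
by exists (q1 * q2); rewrite rmorphM hornerM.
Qed.

Lemma mem_adjoin x : adjoin x x.
Proof. by exists 'X; rewrite map_polyX hornerX. Qed.

Lemma ext_ideal_emb B c : B 1 -> p c -> ext_ideal p B (emb c).
Proof. by move=> B1 pc; exists 1%N, (fun=> c), (fun=> 1); rewrite big_ord1 mulr1. Qed.

Lemma ext_ideal_mull B r y : subring B -> B r -> ext_ideal p B y -> ext_ideal p B (r * y).
Proof.
move=> [_ [_ [_ BM]]] Br [n [s [t [ps [Bt ->]]]]].
exists n, s, (fun i => r * t i); split=> //; split=> [i|]; first exact: BM.
by rewrite mulr_sumr; apply: eq_bigr => i _; rewrite mulrCA.
Qed.

Lemma ext_ideal_lincomb B v y :
  is_ideal p -> (forall z, B z -> lincomb (fun=> True) v z) ->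
  ext_ideal p B y -> lincomb p v y.
Proof.
move=> p_ideal B_span [n [s [t [ps [Bt ->]]]]].
by apply: lincomb_sum => // i; apply: lincomb_scale => //; apply: B_span.
Qed.

Lemma ext_ideal_localization_denom y :
  prime_ideal p -> ext_ideal p (localization p) y ->
  exists c s, [/\ p c, ~ p s & emb s * y = emb c].
Proof.
move=> [[[p0 [pD pM]] p1] p_prime] [n [s [t [ps [Lt ->]]]]].
apply: (big_ind (fun z => exists c s, [/\ p c, ~ p s & emb s * z = emb c])).
- by exists 0, 1; split=> //; rewrite mulr0 rmorph0.
- move=> z1 z2 [c1 [s1 [pc1 ps1 E1]]] [c2 [s2 [pc2 ps2 E2]]].
  exists (s2 * c1 + s1 * c2), (s1 * s2); split; first by apply: pD; apply: pM.
    by case/p_prime.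
  by rewrite rmorphD !rmorphM /= -E1 -E2; ring.
- move=> i _; have [a [s' [ps' ->]]] := Lt i.
  exists (s i * a), s'; split=> //; first by rewrite mulrC; apply: pM.
  have s'_neq0 : emb s' != 0 by rewrite /emb tofrac_eq0; apply: contra_notN ps' => /eqP ->.
  by rewrite rmorphM /= mulrC -mulrA divfK.
Qed.

Lemma straight_ext_ideal B y :
  prime_ideal p -> straight_at p -> overring B -> B y ->
  ext_ideal p (localization p) y -> ext_ideal p B y.
Proof.
move=> p_prime p_straight B_over By /(ext_ideal_localization_denom p_prime) [c [s [pc ps sy]]].
apply: (p_straight B B_over s y ps By); rewrite sy.
by apply: ext_ideal_emb pc; case: B_over => [[_ []]].
Qed.

Lemma adjoin_mod_ext_ideal x a0 :
  ext_ideal p (adjoin x) (x - emb a0) ->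
  forall z, adjoin x z -> exists a, ext_ideal p (adjoin x) (z - emb a).
Proof.
move=> xa0 _ [q ->]; exists q.[a0].
have /factor_theorem [r qE] : root (q - q.[a0]%:P) a0.
  by rewrite /root hornerD hornerN hornerC subrr.
have -> : (map_poly (@emb A) q).[x] - emb q.[a0] = (map_poly (@emb A) r).[x] * (x - emb a0).
  have := congr1 (fun q => (map_poly (@emb A) q).[x]) qE.
  by rewrite /= rmorphB rmorphM /= map_polyXsubC map_polyC hornerD hornerN hornerC hornerM hornerXsubC.
apply: ext_ideal_mull xa0; first by case: (adjoin_overring x).
by exists r.
Qed.

End ExtendedIdeals.

Theorem lemma2p2 (A : idomainType) (p : A -> Prop) :
  local_ring A -> prime_ideal p -> straight_at p ->
  (forall b : K A, ext_ideal p (localization p) b -> ext_ideal p (adjoin b) b) /\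
  (forall x : K A, A_plus p x -> integral_over_A x -> exists a : A, x = emb a).
Proof.
move=> A_local p_prime p_straight; have [[p_ideal _] _] := p_prime.
split=> [b|x [a0 [y [py xE]]] x_int].
  exact: straight_ext_ideal p_prime p_straight (adjoin_overring b) (mem_adjoin b).
have yE : y = x - emb a0 by rewrite xE addrC addKr.
have y_adj : adjoin x y.
  by rewrite yE; exists ('X - a0%:P); rewrite map_polyXsubC hornerXsubC.
have xa0 : ext_ideal p (adjoin x) (x - emb a0).
  by rewrite -yE; exact: straight_ext_ideal p_prime p_straight (adjoin_overring x) y_adj py.
have [n x_span] := adjoin_integral_lincomb x_int.
have powers_A : forall w, w \in mkseq (fun i => x ^+ i) n -> in_A w.
  apply: (nakayama_lincomb p_ideal (local_ring_unit_1B A_local p_prime.1)).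
  move=> _ /mapP [i _ ->].
  have [|a xia] := adjoin_mod_ext_ideal xa0 (z := x ^+ i).
    by exists 'X^i; rewrite map_polyXn hornerXn.
  by exists a; apply: ext_ideal_lincomb x_span xia.
exact: lincomb_in_A powers_A (x_span x (mem_adjoin x)).
Qed.
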